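(* Let $\varphi$ be a closed recHML formula. If there is a reactive monitor (possibly containing $\otimes,\oplus$) that is sound and violation-complete (resp. satisfaction-complete) for $\varphi$ over finfinite traces, then there is some $\psi\in\mathrm{sHML}$ (resp. $\psi\in\mathrm{cHML}$) with $[\![\psi]\!]_F=[\![\varphi]\!]_F$.
   Context: Fix a finite set $\mathrm{Act}$ of actions, $\tau\notin\mathrm{Act}$. recHML formulae: $\varphi::=\mathrm{tt}\mid\mathrm{ff}\mid\varphi\vee\varphi\mid\varphi\wedge\varphi\mid\langle A\rangle\varphi\mid[A]\varphi\mid\min X.\varphi\mid\max X.\varphi\mid X$ ($A\subseteq\mathrm{Act}$), guarded. $\mathrm{sHML}$: $\varphi::=\mathrm{tt}\mid\mathrm{ff}\mid[A]\varphi\mid\varphi\wedge\varphi\mid\max X.\varphi\mid X$; $\mathrm{cHML}$: $\varphi::=\mathrm{tt}\mid\mathrm{ff}\mid\langle A\rangle\varphi\mid\varphi\vee\varphi\mid\min X.\varphi\mid X$. Finfinite traces $\mathrm{Fin}=\mathrm{Act}^\omega\cup\mathrm{Act}^*$; finfinite semantics: $[\![\mathrm{tt}]\!]_F=\mathrm{Fin}$, $[\![\mathrm{ff}]\!]_F=\emptyset$, $\vee,\wedge$ union/intersection, $[\![\langle A\rangle\varphi,\sigma]\!]_F=\{ag\mid a\in A,g\in[\![\varphi,\sigma]\!]_F\}$, $[\![[A]\varphi,\sigma]\!]_F=\{g\mid\forall a\in A,\forall g'.\ g=ag'\Rightarrow g'\in[\![\varphi,\sigma]\!]_F\}$, $\min/\max$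 as least/greatest fixpoints, $[\![X,\sigma]\!]_F=\sigma(X)$. Monitors: $m,n::=v\mid a.m\mid m+n\mid\mathrm{rec}\,x.m\mid x\mid m\otimes n\mid m\oplus n$, verdicts $v::=\mathrm{end}\mid\mathrm{no}\mid\mathrm{yes}$, transitions ($\mu\in\mathrm{Act}\cup\{\tau\}$, $a\in\mathrm{Act}$, $\odot\in\{\otimes,\oplus\}$): $a.m\xrightarrow{a}m$; $\mathrm{rec}\,x.m\xrightarrow{\tau}m[\mathrm{rec}\,x.m/x]$; if $m\xrightarrow{\mu}m'$ then $m+n\xrightarrow{\mu}m'$ and $n+m\xrightarrow{\mu}m'$; $v\xrightarrow{a}v$; if $m\xrightarrow{a}m'$ and $n\xrightarrow{a}n'$ then $m\odot n\xrightarrow{a}m'\odot n'$; if $m\xrightarrow{\tau}m'$ then $m\odot n\xrightarrow{\tau}m'\odot n$ and $n\odot m\xrightarrow{\tau}n\odot m'$; $\mathrm{end}\odot\mathrm{end}\xrightarrow{\tau}\mathrm{end}$; $\mathrm{yes}\otimes m\xrightarrow{\tau}m$, $\mathrm{no}\otimes m\xrightarrow{\tau}\mathrm{no}$, $\mathrm{no}\oplus m\xrightarrow{\tau}m$, $\mathrm{yes}\oplus m\xrightarrow{\tau}\mathrm{yes}$, and symmetric versions. Weak transitions as usual. A monitor is reactive if every state reachable from it can weakly perform every $a\in\mathrm{Act}$. $m$ rejects (accepts) $s\in\mathrm{Act}^*$ iff $m\overset{s}{\Longrightarrow}\mathrm{no}$ ($\mathrm{yes}$), and rejects (accepts) $g\in\mathrm{Fin}$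 iff it rejects (accepts) some finite prefix of $g$. $m$ is sound for $\varphi$ over finfinite traces if for all $g\in\mathrm{Fin}$, rejecting $g$ implies $g\notin[\![\varphi]\!]_F$ and accepting $g$ implies $g\in[\![\varphi]\!]_F$; violation-complete if $g\notin[\![\varphi]\!]_F$ implies $m$ rejects $g$; satisfaction-complete if $g\in[\![\varphi]\!]_F$ implies $m$ accepts $g$. *)

From mathcomp Require Import all_boot.
Set Implicit Arguments. Unset Strict Implicit. Unset Printing Implicit Defensive.

Section Defs.
Variable Act : finType.

Inductive form : Type :=
| Tt | Ff
| Or  of form & form
| And of form & form
| Dia of {set Act} & form
| Box of {set Act} & form
| Min of nat & form
| Max of nat & form
| FVar of nat.

Fixpoint closed_in (bs : seq nat) (p : form) : Prop :=
  match p with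
  | Tt | Ff => True
  | Or p q | And p q => closed_in bs p /\ closed_in bs q
  | Dia _ p | Box _ p => closed_in bs p
  | Min X p | Max X p => closed_in (X :: bs) p
  | FVar X => X \in bs
  end.
Definition closedF (p : form) : Prop := closed_in [::] p.

(* every free occurrence of X in p lies under a modality *)
Fixpoint guarded_in (X : nat) (p : form) : Prop :=
  match p with
  | Tt | Ff => True
  | Or p q | And p q => guarded_in X p /\ guarded_in X q
  | Dia _ _ | Box _ _ => True
  | Min Y p | Max Y p => Y = X \/ guarded_in X p
  | FVar Y => Y <> X
  end.

Fixpoint guarded (p : form) : Prop :=
  match p with
  | Tt | Ff | FVar _ => True
  | Or p q | And p q => guarded p /\ guarded q
  | Dia _ p | Box _ p => guarded p
  | Min X p | Max X p => guarded_in X p /\ guarded p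
  end.

Fixpoint is_sHML (p : form) : Prop :=
  match p with
  | Tt | Ff | FVar _ => True
  | Box _ p | Max _ p => is_sHML p
  | And p q => is_sHML p /\ is_sHML q
  | _ => False
  end.

Fixpoint is_cHML (p : form) : Prop :=
  match p with
  | Tt | Ff | FVar _ => True
  | Dia _ p | Min _ p => is_cHML p
  | Or p q => is_cHML p /\ is_cHML q
  | _ => False
  end.

Inductive ftrace : Type :=
| FinT of seq Act
| InfT of (nat -> Act).

Definition fhead (g : ftrace) : option Act :=
  match g with
  | FinT [::] => None
  | FinT (a :: _) => Some a
  | InfT f => Some (f 0)
  end.

Definition ftail (g : ftrace) : ftrace :=
  match g with
  | FinT [::] => FinT [::]
  | FinT (_ :: s) => FinT s
  | InfT f => InfT (fun n => f n.+1)
  end.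

(* g = a g'  iff  fhead g = Some a and g' = ftail g *)

Definition tset := ftrace -> Prop.
Definition env := nat -> tset.
Definition upd (sigma : env) (X : nat) (S : tset) : env :=
  fun Y => if Y == X then S else sigma Y.

(* finfinite semantics; min/max are least/greatest fixpoints
   (intersection of prefixed points / union of postfixed points) *)
Fixpoint sem (p : form) (sigma : env) : tset :=
  match p with
  | Tt => fun _ => True
  | Ff => fun _ => False
  | Or p q => fun g => sem p sigma g \/ sem q sigma g
  | And p q => fun g => sem p sigma g /\ sem q sigma g
  | Dia A p => fun g => exists a, a \in A /\ fhead g = Some a /\ sem p sigma (ftail g)
  | Box A p => fun g => forall a, a \in A -> fhead g = Some a -> sem p sigma (ftail g)
  | Min X p => fun g =>
      forall S : tset, (forall h, sem p (upd sigma X S) h -> S h) -> S g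
  | Max X p => fun g =>
      exists S : tset, (forall h, S h -> sem p (upd sigma X S) h) /\ S g
  | FVar X => sigma X
  end.

Definition empty_env : env := fun _ _ => False.
Definition semF (p : form) : tset := sem p empty_env.

Inductive verdict := VEnd | VNo | VYes.
Inductive parop := PAnd | POr .

Inductive mon : Type :=
| MV of verdict
| MPre of Act & mon
| MSum of mon & mon
| MRec of nat & mon
| MVar of nat
| MPar of parop & mon & mon.

(* substitution m[n/x] (n will always be the closed term rec x.m) *)
Fixpoint msubst (m : mon) (x : nat) (n : mon) : mon :=
  match m with
  | MV v => MV v
  | MPre a m => MPre a (msubst m x n)
  | MSum m1 m2 => MSum (msubst m1 x n) (msubst m2 x n)
  | MRec y m1 => if y == x then MRec y m1 else MRec y (msubst m1 x n)
  | MVar y => if y == x then n else MVar y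
  | MPar o m1 m2 => MPar o (msubst m1 x n) (msubst m2 x n)
  end.

(* labels: Some a = action a, None = tau *)
Inductive step : mon -> option Act -> mon -> Prop :=
| sPre a m : step (MPre a m) (Some a) m
| sRec x m : step (MRec x m) None (msubst m x (MRec x m))
| sSumL m n mu m' : step m mu m' -> step (MSum m n) mu m'
| sSumR m n mu m' : step m mu m' -> step (MSum n m) mu m'
| sVerd v a : step (MV v) (Some a) (MV v)
| sParA o m n m' n' a :
    step m (Some a) m' -> step n (Some a) n' -> step (MPar o m n) (Some a) (MPar o m' n')
| sParTL o m n m' : step m None m' -> step (MPar o m n) None (MPar o m' n)
| sParTR o m n m' : step m None m' -> step (MPar o n m) None (MPar o n m')
| sEnd o : step (MPar o (MV VEnd) (MV VEnd)) None (MV VEnd)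
| sYesAndL m : step (MPar PAnd (MV VYes) m) None m
| sYesAndR m : step (MPar PAnd m (MV VYes)) None m
| sNoAndL m : step (MPar PAnd (MV VNo) m) None (MV VNo)
| sNoAndR m : step (MPar PAnd m (MV VNo)) None (MV VNo)
| sNoOrL m : step (MPar POr (MV VNo) m) None m
| sNoOrR m : step (MPar POr m (MV VNo)) None m
| sYesOrL m : step (MPar POr (MV VYes) m) None (MV VYes)
| sYesOrR m : step (MPar POr m (MV VYes)) None (MV VYes).

Inductive wtau : mon -> mon -> Prop :=
| wt_refl m : wtau m m
| wt_step m m1 m' : step m None m1 -> wtau m1 m' -> wtau m m'.

Definition wstep (m : mon) (a : Act) (m' : mon) : Prop :=
  exists m1 m2, wtau m m1 /\ step m1 (Some a) m2 /\ wtau m2 m'.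

Inductive wtrace : mon -> seq Act -> mon -> Prop :=
| wtr_nil m m' : wtau m m' -> wtrace m [::] m'
| wtr_cons m a m1 s m' : wstep m a m1 -> wtrace m1 s m' -> wtrace m (a :: s) m'.

Definition reactive (m : mon) : Prop :=
  forall s m', wtrace m s m' -> forall a : Act, exists m'', wstep m' a m''.

Definition is_prefix (s : seq Act) (g : ftrace) : Prop :=
  match g with
  | FinT t => exists t', t = s ++ t'
  | InfT f => s = [seq f i | i <- iota 0 (size s)]
  end.

Definition rejects (m : mon) (g : ftrace) : Prop :=
  exists s, is_prefix s g /\ wtrace m s (MV VNo).
Definition accepts (m : mon) (g : ftrace) : Prop :=
  exists s, is_prefix s g /\ wtrace m s (MV VYes).

Definition sound (m : mon) (p : form) : Prop :=
  forall g, (rejects m g -> ~ semF p g) /\ (accepts m g -> semF p g).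
Definition viol_complete (m : mon) (p : form) : Prop :=
  forall g, ~ semF p g -> rejects m g.
Definition sat_complete (m : mon) (p : form) : Prop :=
  forall g, semF p g -> accepts m g.

End Defs.

(* 1. A sound and violation-complete monitor for phi makes [[phi]] a safety
      property: a finfinite trace satisfies phi iff all its finite prefixes do
      (dually, sound and satisfaction-complete gives a co-safety property:
      some finite prefix does). The finite traces satisfying a guarded formula form a regular language.
      The closure of phi pairs each subformula with the environment under which
      it is evaluated; by guardedness, two words that no member of the closure
      distinguishes remain indistinguishable after prepending an action.  A
      finite family of languages with this congruence property is recognised
      by a finite automaton (a Myhill-Nerode style construction on profiles).
   3. Unfolding a finite automaton from its start state, with one fixpoint
      variable per state, gives a closed guarded sHML formula (max, and, [a])
      saying that every prefix is accepted, and a cHML formula (min, or, <a>)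
      saying that some prefix is accepted. *)

From mathcomp Require Import all_boot boolp.
From Stdlib Require Import Setoid.
From Stdlib Require List.
Set Implicit Arguments. Unset Strict Implicit. Unset Printing Implicit Defensive.

Section Semantics.
Variable Act : finType.
Implicit Types (p : form Act) (sigma : env Act).

Definition tsub (S S' : tset Act) : Prop := forall g, S g -> S' g.

Lemma upd_mono sigma sigma' X S S' :
  (forall Y, tsub (sigma Y) (sigma' Y)) -> tsub S S' ->
  forall Y, tsub (upd sigma X S Y) (upd sigma' X S' Y).
Proof. by move=> Hsigma HS Y; rewrite /upd; case: (Y == X). Qed.

(* The semantics is monotone in the environment (all formulae are positive). *)
Lemma sem_mono p sigma sigma' : (forall Y, tsub (sigma Y) (sigma' Y)) ->
  tsub (sem p sigma) (sem p sigma').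
Proof.
elim: p sigma sigma' => [||p IHp q IHq|p IHp q IHq|A p IHp|A p IHp|X p IHp|X p IHp|X]
  sigma sigma' Hsigma g //=.
- by case=> H; [left; apply: IHp H | right; apply: IHq H].
- by case=> Hp Hq; split; [apply: IHp Hp | apply: IHq Hq].
- by case=> a [Ha [Hhd Hp]]; exists a; do 2 split => //; apply: IHp Hp.
- by move=> Hbox a Ha Hhd; apply: IHp (Hbox a Ha Hhd).
- move=> Hmin S HS; apply: Hmin => h Hh; apply: HS.
  by apply: IHp Hh; apply: upd_mono.
- case=> S [HS Sg]; exists S; split => // h /HS.
  by apply: IHp; apply: upd_mono.
- exact: Hsigma.
Qed.

Lemma unfold_min X p sigma g :
  sem (Min X p) sigma g <-> sem p (upd sigma X (sem (Min X p) sigma)) g.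
Proof.
set M := sem (Min X p) sigma.
have prefixed : tsub (sem p (upd sigma X M)) M.
  move=> h Hh S HS; apply: (HS); apply: sem_mono Hh.
  by apply: upd_mono => [Y h'|h' Mh'] //; exact: Mh' S HS.
split; last exact: prefixed.
by move=> Mg; apply: Mg => h; apply: sem_mono; apply: upd_mono => // Y h'.
Qed.

Lemma unfold_max X p sigma g :
  sem (Max X p) sigma g <-> sem p (upd sigma X (sem (Max X p) sigma)) g.
Proof.
set M := sem (Max X p) sigma.
have postfixed : tsub M (sem p (upd sigma X M)).
  move=> h [S [HS Sh]]; apply: sem_mono (HS _ Sh).
  by apply: upd_mono => [Y h'|h' Sh'] //; exists S.
split; first exact: postfixed.
move=> Fg; exists (sem p (upd sigma X M)); split => // h.
by apply: sem_mono; apply: upd_mono => // Y h'.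
Qed.

End Semantics.

Section Prefixes.
Variable Act : finType.
Implicit Types (g : ftrace Act) (s : seq Act).

Lemma prefix_nil g : is_prefix [::] g.
Proof. by case: g => [t|f] //=; exists t. Qed.

Lemma prefix_cons a s g :
  is_prefix (a :: s) g <-> fhead g = Some a /\ is_prefix s (ftail g).
Proof.
case: g => [[|b t]|f] /=.
- by split; [case | case].
- split; first by case=> t' [-> ->]; split => //; exists t'.
  by case=> [[->]] [t' ->]; exists t'.
- have shift : [seq f i | i <- iota 1 (size s)] = [seq f i.+1 | i <- iota 0 (size s)].
    by rewrite -[1]/(1 + 0) iotaDl -map_comp.
  rewrite shift; split; first by case=> -> Hs.
  by case=> [[<-] Hs]; rewrite -Hs.
Qed.

Lemma prefix_refl s : is_prefix s (FinT s).
Proof. by exists [::]; rewrite cats0. Qed.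

Lemma prefix_trans s' s g : is_prefix s' (FinT s) -> is_prefix s g -> is_prefix s' g.
Proof.
elim: s' s g => [|a s' IH] s g; first by move=> _ _; apply: prefix_nil.
case: s => [|b s] /prefix_cons[] //= [<-] Hs' /prefix_cons[Hhd Hs].
by apply/prefix_cons; split => //; apply: IH Hs' Hs.
Qed.

End Prefixes.

Section MonitoredProperties.
Variable Act : finType.
Implicit Types (m : mon Act) (phi : form Act).

Lemma safety_of_monitor m phi : sound m phi -> viol_complete m phi ->
  forall g, semF phi g <-> (forall s, is_prefix s g -> semF phi (FinT s)).
Proof.
move=> m_sound m_complete g; split.
- move=> Hg s Hs; apply: contrapT => /m_complete [s' [Hs' Hrej]].
  by apply: (proj1 (m_sound g)) Hg; exists s'; split => //; apply: prefix_trans Hs' Hs.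
- move=> Hpre; apply: contrapT => /m_complete [s [Hs Hrej]].
  by apply: (proj1 (m_sound (FinT s))) (Hpre s Hs); exists s; split => //; apply: prefix_refl.
Qed.

Lemma cosafety_of_monitor m phi : sound m phi -> sat_complete m phi ->
  forall g, semF phi g <-> (exists s, is_prefix s g /\ semF phi (FinT s)).
Proof.
move=> m_sound m_complete g; split.
- move=> /m_complete [s [Hs Hacc]]; exists s; split => //.
  by apply: (proj2 (m_sound (FinT s))); exists s; split => //; apply: prefix_refl.
- case=> s [Hs /m_complete [s' [Hs' Hacc]]].
  by apply: (proj2 (m_sound g)); exists s'; split => //; apply: prefix_trans Hs' Hs.
Qed.

End MonitoredProperties.

Section Closure.
Variable Act : finType.
Implicit Types (p : form Act) (sigma : env Act).

(* The closure of p under sigma: its subformulae, each paired with the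
   environment under which it is evaluated inside p (a bound variable denotes
   the fixpoint that binds it). *)
Fixpoint cl p sigma : seq (form Act * env Act) :=
  (p, sigma) :: match p with
  | Or p1 p2 | And p1 p2 => cl p1 sigma ++ cl p2 sigma
  | Dia _ q | Box _ q => cl q sigma
  | Min X q => cl q (upd sigma X (sem (Min X q) sigma))
  | Max X q => cl q (upd sigma X (sem (Max X q) sigma))
  | _ => [::]
  end.

Definition holds (e : form Act * env Act) : tset Act := sem e.1 e.2.

Lemma cl_cons p sigma : exists r, cl p sigma = (p, sigma) :: r.
Proof. by case: p; eexists. Qed.

Lemma Forall_cl_head (P : form Act * env Act -> Prop) p sigma :
  List.Forall P (cl p sigma) -> P (p, sigma).
Proof. by have [r ->] := cl_cons p sigma; apply: List.Forall_inv. Qed.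

Definition indist (u u' : seq Act) (S : tset Act) : Prop := S (FinT u) <-> S (FinT u').

Section Prefixing.
Variables (a : Act) (w w' : seq Act).

(* Modalities consume the action a and fall back on the
   closure; fixpoints are unfolded, their own variable being guarded. *)
Lemma sem_indist_cons p sigma : guarded p ->
  List.Forall (fun e => indist w w' (holds e)) (cl p sigma) ->
  (forall X, ~ guarded_in X p -> indist (a :: w) (a :: w') (sigma X)) ->
  indist (a :: w) (a :: w') (sem p sigma).
Proof.
elim: p sigma => [||p IHp q IHq|p IHp q IHq|A p IHp|A p IHp|X p IHp|X p IHp|X]
  sigma Hgd Hcl Hfree; have Hsub := List.Forall_inv_tail Hcl => //.
- case: Hgd => Hgp Hgq; have /List.Forall_app[Hp Hq] := Hsub.
  have := IHp _ Hgp Hp (fun Y HY => Hfree Y (fun G => HY (proj1 G))).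
  have := IHq _ Hgq Hq (fun Y HY => Hfree Y (fun G => HY (proj2 G))).
  by rewrite /indist /= => -> ->.
- case: Hgd => Hgp Hgq; have /List.Forall_app[Hp Hq] := Hsub.
  have := IHp _ Hgp Hp (fun Y HY => Hfree Y (fun G => HY (proj1 G))).
  have := IHq _ Hgq Hq (fun Y HY => Hfree Y (fun G => HY (proj2 G))).
  by rewrite /indist /= => -> ->.
- have Ep : indist w w' (sem p sigma) := Forall_cl_head Hsub.
  by split=> -[b [Hb [Hhd /Ep Hp]]]; exists b.
- have Ep : indist w w' (sem p sigma) := Forall_cl_head Hsub.
  by split=> Hbox b Hb Hhd; apply/Ep; apply: Hbox Hb Hhd.
- rewrite /indist !unfold_min; apply: IHp => [|//|Y HY]; first exact: Hgd.2.
  rewrite /= /upd; case: eqP => [EY|NEY]; first by rewrite EY in HY; case: (HY Hgd.1).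
  by apply: Hfree => /= -[EXY|//]; apply: NEY; rewrite EXY.
- rewrite /indist !unfold_max; apply: IHp => [|//|Y HY]; first exact: Hgd.2.
  rewrite /= /upd; case: eqP => [EY|NEY]; first by rewrite EY in HY; case: (HY Hgd.1).
  by apply: Hfree => /= -[EXY|//]; apply: NEY; rewrite EXY.
- by apply: Hfree.
Qed.

Lemma cl_indist_cons p sigma : guarded p ->
  List.Forall (fun e => indist w w' (holds e)) (cl p sigma) ->
  (forall X, indist (a :: w) (a :: w') (sigma X)) ->
  List.Forall (fun e => indist (a :: w) (a :: w') (holds e)) (cl p sigma).
Proof.
elim: p sigma => [||p IHp q IHq|p IHp q IHq|A p IHp|A p IHp|X p IHp|X p IHp|X]
  sigma Hgd Hcl Henv; constructor; try exact: sem_indist_cons Hgd Hcl (fun X _ => Henv X);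
  have Hsub := List.Forall_inv_tail Hcl; try by [].
- case: Hgd => Hgp Hgq; case/List.Forall_app: Hsub => Hp Hq.
  by apply/List.Forall_app; split; [apply: IHp | apply: IHq].
- case: Hgd => Hgp Hgq; case/List.Forall_app: Hsub => Hp Hq.
  by apply/List.Forall_app; split; [apply: IHp | apply: IHq].
- exact: IHp.
- exact: IHp.
- apply: IHp Hsub _ => [|Y]; first exact: Hgd.2.
  rewrite /upd; case: (Y == X) => //.
  by apply: sem_indist_cons Hgd Hcl (fun X _ => Henv X).
- apply: IHp Hsub _ => [|Y]; first exact: Hgd.2.
  rewrite /upd; case: (Y == X) => //.
  by apply: sem_indist_cons Hgd Hcl (fun X _ => Henv X).
Qed.

End Prefixing.
End Closure.

Record dfa (Act : finType) : Type := Dfa {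
  dfa_state : finType;
  dfa_trans : dfa_state -> Act -> dfa_state;
  dfa_start : dfa_state;
  dfa_final : pred dfa_state }.

Definition dfa_accepts (Act : finType) (A : dfa Act) (s : seq Act) : bool :=
  dfa_final (foldl (@dfa_trans _ A) (dfa_start A) s).

Section FiniteCongruence.
Variables (Act I : finType) (P : I -> seq Act -> Prop) (i0 : I).

Hypothesis P_cons : forall w w', (forall i, P i w <-> P i w') ->
  forall a i, P i (a :: w) <-> P i (a :: w').

Definition profile (w : seq Act) : {ffun I -> bool} := [ffun i => `[< P i w >]].

Lemma profileP w w' : profile w = profile w' <-> forall i, P i w <-> P i w'.
Proof.
split=> [E i|E]; last by apply/ffunP => i; rewrite !ffunE; apply: asbool_equiv_eq.
have := congr1 (fun f : {ffun I -> bool} => f i) E; rewrite !ffunE => Ei.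
by split=> Hi; apply/asboolP; [rewrite -Ei | rewrite Ei]; apply/asboolP.
Qed.

Lemma profile_cat u w w' : profile w = profile w' -> profile (u ++ w) = profile (u ++ w').
Proof. by elim: u => //= a u IH /IH /profileP E; apply/profileP; apply: P_cons. Qed.

Definition witness (tau : {ffun I -> bool}) : seq Act :=
  if pselect (exists w, profile w = tau) is left H then projT1 (cid H) else [::].

Lemma profile_witness w : profile (witness (profile w)) = profile w.
Proof.
rewrite /witness; case: pselect => [H|[]]; last by exists w.
exact: projT2 (cid H).
Qed.

(* The states are maps from profiles to booleans: after reading u, the state
   tells for every profile tau whether the continuations w of profile tau make
   u w belong to P i0.  Reading a shifts the continuations by a. *)
Definition cont_trans (f : {ffun {ffun I -> bool} -> bool}) (a : Act) :
    {ffun {ffun I -> bool} -> bool} :=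
  [ffun tau => f (profile (a :: witness tau))].

(* The invariant: f is the state reached after reading u. *)
Definition represents (f : {ffun {ffun I -> bool} -> bool}) (u : seq Act) : Prop :=
  forall w, f (profile w) = profile (u ++ w) i0.

Definition cont_start : {ffun {ffun I -> bool} -> bool} :=
  [ffun tau : {ffun I -> bool} => tau i0].

Lemma represents_start : represents cont_start [::].
Proof. by move=> w; rewrite ffunE. Qed.

Lemma represents_run s f u : represents f u -> represents (foldl cont_trans f s) (u ++ s).
Proof.
elim: s f u => [|a s IH] f u Hf /=; first by rewrite cats0.
rewrite -cat_rcons; apply: IH => w; rewrite ffunE Hf cat_rcons.
by rewrite (profile_cat u (profile_cat [:: a] (profile_witness w))).
Qed.

Lemma finite_congruence_regular : exists A : dfa Act, forall s, dfa_accepts A s <-> P i0 s.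
Proof.
exists (Dfa cont_trans cont_start (fun f => f (profile [::]))) => s.
rewrite /dfa_accepts /= (represents_run s represents_start) /= cats0 ffunE.
by split=> /asboolP.
Qed.

End FiniteCongruence.

Section ClosureRegular.
Variables (Act : finType) (phi : form Act).
Hypothesis phi_guarded : guarded phi.

Let clos := cl phi (@empty_env Act).

Let clos_lang (i : 'I_(List.length clos)) (w : seq Act) : Prop :=
  holds (List.nth i clos (phi, @empty_env Act)) (FinT w).

Lemma clos_lang_cons w w' : (forall i, clos_lang i w <-> clos_lang i w') ->
  forall a i, clos_lang i (a :: w) <-> clos_lang i (a :: w').
Proof.
move=> E a i.
have Hw : List.Forall (fun e => indist w w' (holds e)) clos.
  apply/List.Forall_forall => e /(List.In_nth _ _ (phi, @empty_env Act)) [n [Hn <-]].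
  exact: (E (Ordinal (introT ltP Hn))).
have := cl_indist_cons (a := a) phi_guarded Hw (fun X => iff_refl _).
by move/List.Forall_nth => /(_ i (phi, @empty_env Act) (elimT ltP (ltn_ord i))).
Qed.

Lemma guarded_regular : exists A : dfa Act, forall s, dfa_accepts A s <-> semF phi (FinT s).
Proof.
have [r Hr] := cl_cons phi (@empty_env Act).
have pos : 0 < List.length clos by rewrite /clos Hr.
have [A HA] := finite_congruence_regular (Ordinal pos) clos_lang_cons.
exists A => s; rewrite HA /clos_lang /=.
suff -> : List.nth 0 clos (phi, @empty_env Act) = (phi, @empty_env Act) by [].
by rewrite /clos Hr.
Qed.

End ClosureRegular.

Section Unfolding.
Variables (Act Q : finType) (dl : Q -> Act -> Q) (ac : pred Q).
Implicit Types (x y : Q) (vis : seq Q) (sigma : env Act) (g : ftrace Act) (s : seq Act).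

Definition run x s : Q := foldl dl x s.

Definition code x : nat := enum_rank x.

Lemma code_inj : injective code.
Proof. by move=> x y /ord_inj /enum_rank_inj. Qed.

Lemma env_extend (R : Q -> tset Act -> Prop) vis x sigma S :
  (forall y, y \in vis -> R y (sigma (code y))) -> R x S ->
  forall y, y \in x :: vis -> R y (upd sigma (code x) S (code y)).
Proof.
move=> Hvis HS y; rewrite inE /upd; case: (eqVneq y x) => [->|nyx] /=.
  by rewrite eqxx.
by rewrite (inj_eq code_inj) (negbTE nyx); apply: Hvis.
Qed.

(* The visited states are distinct, so fuel is left when a state is fresh. *)
Lemma fresh_fuel k vis x : uniq vis -> #|Q| <= k + size vis -> x \notin vis -> 0 < k.
Proof.
case: k => // Hu Hc Hx.
have /card_uniqP Hcard : uniq (x :: vis) by rewrite /= Hx Hu.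
by have := leq_trans (max_card (mem (x :: vis))) Hc; rewrite Hcard add0n /= ltnn.
Qed.

Definition bigAnd (l : seq (form Act)) : form Act := foldr (@And Act) (Tt Act) l.
Definition bigOr (l : seq (form Act)) : form Act := foldr (@Or Act) (Ff Act) l.

Lemma sem_bigAnd (F : Act -> form Act) sigma g :
  sem (bigAnd [seq F a | a <- enum Act]) sigma g <-> (forall a, sem (F a) sigma g).
Proof.
suff gen l : sem (bigAnd [seq F a | a <- l]) sigma g <-> (forall a, a \in l -> sem (F a) sigma g).
  by rewrite gen; split=> H a //; apply: H; rewrite mem_enum.
elim: l => [|b l IH] /=; first by [].
rewrite IH; split=> [[Hb Hl] a|H]; last by split=> [|a Ha]; apply: H; rewrite inE ?eqxx ?Ha ?orbT.
by rewrite inE => /predU1P[->|/Hl].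
Qed.

Lemma sem_bigOr (F : Act -> form Act) sigma g :
  sem (bigOr [seq F a | a <- enum Act]) sigma g <-> (exists a, sem (F a) sigma g).
Proof.
suff gen l : sem (bigOr [seq F a | a <- l]) sigma g <-> (exists2 a, a \in l & sem (F a) sigma g).
  by rewrite gen; split=> [[a _ Ha]|[a Ha]]; exists a => //; rewrite mem_enum.
elim: l => [|b l IH] /=; first by split=> // -[].
rewrite IH; split=> [[Hb|[a Ha HFa]]|[a]]; first by exists b; rewrite ?inE ?eqxx.
  by exists a; rewrite // inE Ha orbT.
by rewrite inE => /predU1P[-> Hb|Ha HFa]; [left | right; exists a].
Qed.

Lemma big_form_ind (R : form Act -> Prop) op e (F : Act -> form Act) :
  R e -> (forall f f', R f -> R f' -> R (op f f')) -> (forall a, R (F a)) ->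
  R (foldr op e [seq F a | a <- enum Act]).
Proof. by move=> Re Rop RF; elim: (enum Act) => //= a l; apply: Rop. Qed.

Definition acc_form x : form Act := if ac x then Tt Act else Ff Act.

Lemma sem_acc_form x sigma g : sem (acc_form x) sigma g <-> ac x.
Proof. by rewrite /acc_form; case: (ac x). Qed.

(* always_form k vis x unfolds the automaton from x, binding a greatest
   fixpoint per state; states already in vis are referred to by their
   variable, and k is fuel.  It states that every prefix read from x is
   accepted.  eventually_form dually states that some prefix is accepted. *)
Fixpoint always_form k vis x : form Act :=
  if x \in vis then FVar Act (code x) else
  if k is k'.+1 then
    Max (code x) (And (acc_form x)
      (bigAnd [seq Box [set a] (always_form k' (x :: vis) (dl x a)) | a <- enum Act]))
  else Tt Act.

Fixpoint eventually_form k vis x : form Act :=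
  if x \in vis then FVar Act (code x) else
  if k is k'.+1 then
    Min (code x) (Or (acc_form x)
      (bigOr [seq Dia [set a] (eventually_form k' (x :: vis) (dl x a)) | a <- enum Act]))
  else Ff Act.

Lemma always_form_syntax k vis x : let psi := always_form k vis x in
  [/\ is_sHML psi, closed_in [seq code y | y <- vis] psi & guarded psi].
Proof.
elim: k vis x => [|k IH] vis x /=; case: ifP => Hx /=; try by split => //; apply: map_f.
rewrite /acc_form; split.
- by split; [case: (ac x) | apply: big_form_ind => // a; case: (IH (x :: vis) (dl x a))].
- by split; [case: (ac x) | apply: big_form_ind => // a; case: (IH (x :: vis) (dl x a))].
- split; first by split; [case: (ac x) | apply: big_form_ind].
  by split; [case: (ac x) | apply: big_form_ind => // a; case: (IH (x :: vis) (dl x a))].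
Qed.

Lemma eventually_form_syntax k vis x : let psi := eventually_form k vis x in
  [/\ is_cHML psi, closed_in [seq code y | y <- vis] psi & guarded psi].
Proof.
elim: k vis x => [|k IH] vis x /=; case: ifP => Hx /=; try by split => //; apply: map_f.
rewrite /acc_form; split.
- by split; [case: (ac x) | apply: big_form_ind => // a; case: (IH (x :: vis) (dl x a))].
- by split; [case: (ac x) | apply: big_form_ind => // a; case: (IH (x :: vis) (dl x a))].
- split; first by split; [case: (ac x) | apply: big_form_ind].
  by split; [case: (ac x) | apply: big_form_ind => // a; case: (IH (x :: vis) (dl x a))].
Qed.

Definition all_acc x g : Prop := forall s, is_prefix s g -> ac (run x s).
Definition all_acc_upto n x g : Prop :=
  forall s, size s <= n -> is_prefix s g -> ac (run x s).

Definition some_acc x g : Prop := exists s, is_prefix s g /\ ac (run x s).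
Definition some_acc_upto n x g : Prop :=
  exists s, [/\ size s <= n, is_prefix s g & ac (run x s)].

Lemma all_acc_upto_mono m n x : m <= n -> tsub (all_acc_upto n x) (all_acc_upto m x).
Proof. by move=> lemn g Hg s Hs; apply: Hg; apply: leq_trans lemn. Qed.

Lemma some_acc_upto_mono m n x : m <= n -> tsub (some_acc_upto m x) (some_acc_upto n x).
Proof. by move=> lemn g [s [Hs Hp Ha]]; exists s; split => //; apply: leq_trans lemn. Qed.

Lemma always_form_complete k vis x sigma : uniq vis -> #|Q| <= k + size vis ->
  (forall y, y \in vis -> tsub (all_acc y) (sigma (code y))) ->
  tsub (all_acc x) (sem (always_form k vis x) sigma).
Proof.
elim: k vis x sigma => [|k IH] vis x sigma Hu Hc Hvis /=; case: ifP => Hx; try exact: Hvis.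
  by have := fresh_fuel Hu Hc (negbT Hx).
have Hu' : uniq (x :: vis) by rewrite /= Hx Hu.
have Hc' : #|Q| <= k + size (x :: vis) by rewrite addnS.
move=> g Hg; exists (all_acc x); split => // h Hh; split.
  by apply/sem_acc_form; apply: (Hh [::]); apply: prefix_nil.
apply/sem_bigAnd => a b /set1P -> Hhd.
apply: (IH _ _ _ Hu' Hc').
  by apply: (env_extend (R := fun y T => tsub (all_acc y) T)) => // h'.
by move=> s Hs; apply: (Hh (a :: s)); apply/prefix_cons.
Qed.

(* Soundness of always_form, proved for the length-bounded approximations
   all_acc_upto n by induction on the bound inside the greatest fixpoint. *)
Lemma always_form_sound k vis x sigma n : uniq vis -> #|Q| <= k + size vis ->
  (forall y, y \in vis -> tsub (sigma (code y)) (all_acc_upto n y)) ->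
  tsub (sem (always_form k vis x) sigma) (all_acc_upto n x).
Proof.
elim: k vis x sigma n => [|k IH] vis x sigma n Hu Hc Hvis /=; case: ifP => Hx; try exact: Hvis.
  by have := fresh_fuel Hu Hc (negbT Hx).
have Hu' : uniq (x :: vis) by rewrite /= Hx Hu.
have Hc' : #|Q| <= k + size (x :: vis) by rewrite addnS.
move=> g [S [HS Sg]].
suff HSm m : m <= n -> tsub S (all_acc_upto m x) by exact: HSm n (leqnn n) g Sg.
elim: m => [|m IHm] Hm h Sh [|a s] //; try by move=> _ _; case: (HS h Sh) => /sem_acc_form.
move=> Hs /prefix_cons[Hhd Hpre]; have [_ /sem_bigAnd Hbox] := HS h Sh.
apply: (IH _ _ _ m Hu' Hc' _ _ (Hbox a a (set11 a) Hhd)) => //.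
apply: (env_extend (R := fun y T => tsub T (all_acc_upto m y))) => [y /Hvis Hy h' /Hy|].
  by apply: all_acc_upto_mono (ltnW Hm) _.
exact: IHm (ltnW Hm).
Qed.

Lemma eventually_form_sound k vis x sigma : uniq vis -> #|Q| <= k + size vis ->
  (forall y, y \in vis -> tsub (sigma (code y)) (some_acc y)) ->
  tsub (sem (eventually_form k vis x) sigma) (some_acc x).
Proof.
elim: k vis x sigma => [|k IH] vis x sigma Hu Hc Hvis /=; case: ifP => Hx; try exact: Hvis.
  by have := fresh_fuel Hu Hc (negbT Hx).
have Hu' : uniq (x :: vis) by rewrite /= Hx Hu.
have Hc' : #|Q| <= k + size (x :: vis) by rewrite addnS.
move=> g; apply=> h [/sem_acc_form Hacc | /sem_bigOr [a [b [/set1P -> [Hhd Hsub]]]]].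
  by exists [::]; split; first exact: prefix_nil.
have [|s [Hs Has]] := IH _ _ _ Hu' Hc' _ _ Hsub.
  by apply: (env_extend (R := fun y T => tsub T (some_acc y))) => // h'.
by exists (a :: s); split => //; apply/prefix_cons.
Qed.

(* Completeness of eventually_form for prefixes of length at most n, by
   induction on the bound inside the least fixpoint. *)
Lemma eventually_form_complete k vis x sigma n : uniq vis -> #|Q| <= k + size vis ->
  (forall y, y \in vis -> tsub (some_acc_upto n y) (sigma (code y))) ->
  tsub (some_acc_upto n x) (sem (eventually_form k vis x) sigma).
Proof.
elim: k vis x sigma n => [|k IH] vis x sigma n Hu Hc Hvis /=; case: ifP => Hx; try exact: Hvis.
  by have := fresh_fuel Hu Hc (negbT Hx).
have Hu' : uniq (x :: vis) by rewrite /= Hx Hu.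
have Hc' : #|Q| <= k + size (x :: vis) by rewrite addnS.
move=> g Hg S HS.
suff HSm m : m <= n -> tsub (some_acc_upto m x) S by exact: HSm n (leqnn n) g Hg.
elim: m => [|m IHm] Hm h [[|a s] [Hs Hpre Hacc]] //; try by apply: HS; left; apply/sem_acc_form.
case/prefix_cons: Hpre => Hhd Hpre; apply: HS; right; apply/sem_bigOr.
exists a, a; split; first exact: set11.
split => //; apply: (IH _ _ _ m Hu' Hc'); last by exists s.
apply: (env_extend (R := fun y T => tsub (some_acc_upto m y) T)) => [y /Hvis Hy h' |].
  by move/(some_acc_upto_mono (ltnW Hm)); apply: Hy.
exact: IHm (ltnW Hm).
Qed.

End Unfolding.

Section AutomataFormulae.
Variables (Act : finType) (A : dfa Act).
Implicit Types (g : ftrace Act).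

Lemma dfa_always_sHML : exists psi : form Act,
  is_sHML psi /\ closedF psi /\ guarded psi /\
  forall g, semF psi g <-> (forall s, is_prefix s g -> dfa_accepts A s).
Proof.
have := always_form_syntax (@dfa_trans _ A) (@dfa_final _ A) #|dfa_state A| [::] (dfa_start A).
set psi := always_form _ _ _ _ _ => -[psi_sHML psi_closed psi_guarded].
exists psi; do 3 split => //; move=> g; split.
- move=> Hg s Hs; apply: (always_form_sound (n := size s) _ _ _ Hg) => //.
  by rewrite addn0.
- by apply: always_form_complete => //; rewrite addn0.
Qed.

Lemma dfa_eventually_cHML : exists psi : form Act,
  is_cHML psi /\ closedF psi /\ guarded psi /\
  forall g, semF psi g <-> (exists s, is_prefix s g /\ dfa_accepts A s).
Proof.
have := eventually_form_syntax (@dfa_trans _ A) (@dfa_final _ A) #|dfa_state A| [::] (dfa_start A).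
set psi := eventually_form _ _ _ _ _ => -[psi_cHML psi_closed psi_guarded].
exists psi; do 3 split => //; move=> g; split.
- by apply: eventually_form_sound => //; rewrite addn0.
- case=> s [Hs Has]; apply: (eventually_form_complete (n := size s)) => //.
    by rewrite addn0.
  by exists s.
Qed.

End AutomataFormulae.

Theorem mainTheorem12 (Act : finType) (phi : form Act) :
  closedF phi -> guarded phi ->
  ((exists m : mon Act, reactive m /\ sound m phi /\ viol_complete m phi) ->
     exists psi : form Act, is_sHML psi /\ closedF psi /\ guarded psi /\
       (forall g, semF psi g <-> semF phi g)) /\
  ((exists m : mon Act, reactive m /\ sound m phi /\ sat_complete m phi) ->
     exists psi : form Act, is_cHML psi /\ closedF psi /\ guarded psi /\
       (forall g, semF psi g <-> semF phi g)).
Proof.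
move=> _ phi_guarded; have [A accepts_phi] := guarded_regular phi_guarded.
split=> -[m [_ [m_sound m_complete]]].
- have [psi [psi_sHML [psi_closed [psi_guarded psi_sem]]]] := dfa_always_sHML A.
  exists psi; do 3 split => //; move=> g.
  rewrite psi_sem (safety_of_monitor m_sound m_complete g).
  by split=> H s /H /accepts_phi.
- have [psi [psi_cHML [psi_closed [psi_guarded psi_sem]]]] := dfa_eventually_cHML A.
  exists psi; do 3 split => //; move=> g.
  rewrite psi_sem (cosafety_of_monitor m_sound m_complete g).
  by split=> -[s [Hs /accepts_phi Has]]; exists s.
Qed.
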